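(* In the tabular setting with possibly stochastic empirical dynamics, every maximizer $\pi^*$ of $\bar R(\pi)$ and every maximizer $\pi_1^*$ of $\bar R_1(\pi)$ over all policies satisfy $$\operatorname{supp}(\pi^*(\cdot\mid s))\subseteq\operatorname{supp}(\beta(\cdot\mid s))\quad\text{and}\quad \operatorname{supp}(\pi_1^*(\cdot\mid s))\subseteq\operatorname{supp}(\beta(\cdot\mid s))\qquad\text{for all } s\in\mathcal D.$$
   Context: Finite state space $\mathcal S$ and finite action space $\mathcal A$. $\mathcal D$ is a finite dataset of transitions $(s,a,s')$; ''$s\in\mathcal D$'' means $s$ occurs as the first component of some transition. $\beta(a\mid s)$ is the empirical behavior policy (fraction of transitions from $s$ with action $a$). $M(s'\mid s,a)$ is the empirical dynamics model: the fraction of transitions from $(s,a)$ ending in $s'$ if $(s,a)$ occurs in $\mathcal D$, and $0$ otherwise. $N(s'\mid s)=\sum_a\beta(a\mid s)M(s'\mid s,a)$. $V:\mathcal S\to\mathbb R$ is a fixed real function and $\alpha\ge 0$ a constant. $Z(s)=\sum_{s'}\exp(\alpha V(s'))N(s'\mid s)$. A policy $\pi$ assigns a distribution $\pi(\cdot\mid s)$ on $\mathcal A$ to each state; $M(s'\mid s,\pi(\cdot\mid s)):=\sum_a\pi(a\mid s)M(s'\mid s,a)$. $\mathbb E_{(s,s')\sim\mathcal D}$ denotes the average over the transitions of $\mathcal D$. The objectives (with $\log 0=-\infty$) are $$\bar R(\pi)=\mathbb E_{(s,s')\sim\mathcal D}\Big[\tfrac{\exp(\alpha V(s'))}{Z(s)}\log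 M(s'\mid s,\pi(\cdot\mid s))\Big],\qquad \bar R_1(\pi)=\mathbb E_{(s,s')\sim\mathcal D}\Big[\tfrac{\exp(\alpha V(s'))}{\exp(\alpha V(s))}\log M(s'\mid s,\pi(\cdot\mid s))\Big].$$ *)

From HB Require Import structures.
From mathcomp Require Import all_boot all_order all_algebra.
From mathcomp Require Import all_classical all_reals all_analysis.
Set Implicit Arguments. Unset Strict Implicit. Unset Printing Implicit Defensive.
Import Order.TTheory GRing.Theory Num.Theory.
Local Open Scope ring_scope.

Section Tabular.
Variables (R : realType) (S A : finType).

(* A transition (s, a, s') is the triple ((s, a), s'):
   t.1.1 = s, t.1.2 = a, t.2 = s'. A dataset is a finite list (multiset). *)
Definition trans := (S * A * S)%type.

Variable D : seq trans.

Definition in_data (s : S) : bool := has (fun t : trans => t.1.1 == s) D.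

Definition cnt_s (s : S) : nat := count (fun t : trans => t.1.1 == s) D.
Definition cnt_sa (s : S) (a : A) : nat :=
  count (fun t : trans => (t.1.1 == s) && (t.1.2 == a)) D.
Definition cnt_sas (s : S) (a : A) (s' : S) : nat :=
  count (fun t : trans => [&& t.1.1 == s, t.1.2 == a & t.2 == s']) D.

Definition beta (s : S) (a : A) : R := (cnt_sa s a)%:R / (cnt_s s)%:R.

Definition Mdyn (s : S) (a : A) (s' : S) : R :=
  if (0 < cnt_sa s a)%N then (cnt_sas s a s')%:R / (cnt_sa s a)%:R else 0.

Definition Ndyn (s s' : S) : R := \sum_(a : A) beta s a * Mdyn s a s'.

Definition Zpart (alpha : R) (V : S -> R) (s : S) : R :=
  \sum_(s' : S) expR (alpha * V s') * Ndyn s s'.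

Definition is_policy (pi : S -> A -> R) : Prop :=
  forall s, (forall a, 0 <= pi s a) /\ \sum_(a : A) pi s a = 1.

Definition Mpol (pi : S -> A -> R) (s s' : S) : R :=
  \sum_(a : A) pi s a * Mdyn s a s'.

Definition elog (x : R) : \bar R := if 0 < x then (ln x)%:E else -oo%E.

Definition avg_obj (w : S -> S -> R) (pi : S -> A -> R) : \bar R :=
  (((size D)%:R)^-1%:E *
   \sum_(t <- D) ((w t.1.1 t.2)%:E * elog (Mpol pi t.1.1 t.2)))%E.

Definition Rbar_obj (alpha : R) (V : S -> R) (pi : S -> A -> R) : \bar R :=
  avg_obj (fun s s' => expR (alpha * V s') / Zpart alpha V s) pi.

Definition Rbar1_obj (alpha : R) (V : S -> R) (pi : S -> A -> R) : \bar R :=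
  avg_obj (fun s s' => expR (alpha * V s') / expR (alpha * V s)) pi.

Definition is_maximizer (J : (S -> A -> R) -> \bar R) (pi : S -> A -> R) : Prop :=
  is_policy pi /\ forall pi', is_policy pi' -> (J pi' <= J pi)%E.

End Tabular.

Definition supp (R : realType) (A : Type) (p : A -> R) : set A :=
  [set a | p a != 0].

From mathcomp Require Import all_boot all_order all_algebra.
From mathcomp Require Import all_classical all_reals all_analysis.
Set Implicit Arguments. Unset Strict Implicit. Unset Printing Implicit Defensive.
Import Order.TTheory GRing.Theory Num.Theory.
Local Open Scope classical_set_scope.
Local Open Scope ring_scope.

(* Every data transition (s, a, s') has M(s'|s,a) > 0, so a maximizer must keep
   M(s'|s,pi) > 0 on the data: otherwise its objective is -oo, while following
   beta on data states gives a finite value.  If a maximizer put mass on an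
   action a with beta(a|s) = 0, then M(.|s,a) = 0, so moving that mass onto the
   action a0 of a data transition (s, a0, s') leaves every M(.|s,pi) unchanged
   except that M(s'|s,pi) strictly grows; as ln is increasing and all weights
   are positive, the objective strictly grows, a contradiction. *)

Lemma ltr_sum_mem (R : numDomainType) (I : eqType) (r : seq I) (i0 : I)
    (F G : I -> R) :
  i0 \in r -> (forall i, i \in r -> F i <= G i) -> F i0 < G i0 ->
  \sum_(i <- r) F i < \sum_(i <- r) G i.
Proof.
move=> ri0 leFG ltFG0.
rewrite !(perm_big _ (perm_to_rem ri0)) !big_cons ltr_leD //.
by rewrite !big_seq; apply: ler_sum => i /mem_rem /leFG.
Qed.

Lemma sum_indicatorM (R : pzSemiRingType) (I : finType) (c : I) (F : I -> R) :
  \sum_(i : I) (i == c)%:R * F i = F c.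
Proof.
by rewrite (bigD1 c) //= eqxx mul1r big1 ?addr0 // => i /negbTE ->; rewrite mul0r.
Qed.

Section EmpiricalModel.
Variables (R : realType) (S A : finType) (D : seq (trans S A)).

Local Notation beta := (@beta R S A D).
Local Notation Mdyn := (@Mdyn R S A D).
Local Notation Mpol := (@Mpol R S A D).
Local Notation Ndyn := (@Ndyn R S A D).

Lemma count_gt0_mem {t} {P : pred (trans S A)} :
  t \in D -> P t -> (0 < count P D)%N.
Proof. by move=> tD Pt; rewrite -has_count; apply/hasP; exists t. Qed.

Lemma cnt_sa_gt0 {t} : t \in D -> (0 < cnt_sa D t.1.1 t.1.2)%N.
Proof. by move=> tD; apply: (count_gt0_mem tD); rewrite /= !eqxx. Qed.

Lemma cnt_sas_gt0 {t} : t \in D -> (0 < cnt_sas D t.1.1 t.1.2 t.2)%N.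
Proof. by move=> tD; apply: (count_gt0_mem tD); rewrite /= !eqxx. Qed.

Lemma cnt_s_gt0 s : in_data D s -> (0 < cnt_s D s)%N.
Proof. by rewrite /cnt_s -has_count. Qed.

Lemma cnt_sa_le s a : (cnt_sa D s a <= cnt_s D s)%N.
Proof. by apply: sub_count => t /andP[]. Qed.

Lemma sum_cnt_sa s : (\sum_(a : A) cnt_sa D s a)%N = cnt_s D s.
Proof.
rewrite /cnt_sa /cnt_s; elim: D => [|t r IH]; first by rewrite big1.
rewrite /= big_split /= IH; congr (_ + _)%N.
case: (t.1.1 == s) => /=; last by rewrite big1.
by rewrite (bigD1 t.1.2) //= eqxx big1 // => a /negbTE; rewrite eq_sym => ->.
Qed.

Lemma inv_size_gt0 {t} : t \in D -> 0 < (size D)%:R^-1 :> R.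
Proof. by rewrite invr_gt0 ltr0n; case: D. Qed.

Lemma beta_ge0 s a : 0 <= beta s a.
Proof. exact: divr_ge0. Qed.

Lemma Mdyn_ge0 s a s' : 0 <= Mdyn s a s'.
Proof. by rewrite /Mdyn; case: ifP => // _; rewrite divr_ge0. Qed.

Lemma beta_gt0 {t} : t \in D -> 0 < beta t.1.1 t.1.2.
Proof.
move=> tD; have sa_gt0 := cnt_sa_gt0 tD.
by rewrite divr_gt0 // ltr0n // (leq_trans sa_gt0 (cnt_sa_le _ _)).
Qed.

Lemma Mdyn_gt0 {t} : t \in D -> 0 < Mdyn t.1.1 t.1.2 t.2.
Proof.
move=> tD.
by rewrite /Mdyn cnt_sa_gt0 // divr_gt0 ?ltr0n ?cnt_sas_gt0 ?cnt_sa_gt0.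
Qed.

Lemma Ndyn_gt0 {t} : t \in D -> 0 < Ndyn t.1.1 t.2.
Proof.
move=> tD; rewrite /Ndyn (bigD1 t.1.2) //=.
rewrite ltr_pwDl ?(mulr_gt0 (beta_gt0 tD) (Mdyn_gt0 tD)) //.
by apply: sumr_ge0 => a _; rewrite mulr_ge0 ?beta_ge0 ?Mdyn_ge0.
Qed.

Lemma Zpart_gt0 (alpha : R) (V : S -> R) {t} :
  t \in D -> 0 < Zpart D alpha V t.1.1.
Proof.
move=> tD; rewrite /Zpart (bigD1 t.2) //=.
rewrite ltr_pwDl ?(mulr_gt0 (expR_gt0 _) (Ndyn_gt0 tD)) //.
apply: sumr_ge0 => s' _; rewrite mulr_ge0 ?expR_ge0 //.
by apply: sumr_ge0 => a _; rewrite mulr_ge0 ?beta_ge0 ?Mdyn_ge0.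
Qed.

Lemma sum_beta s : in_data D s -> \sum_(a : A) beta s a = 1.
Proof.
move=> /cnt_s_gt0 s_gt0.
by rewrite -mulr_suml -natr_sum sum_cnt_sa divff // pnatr_eq0 -lt0n.
Qed.

Lemma beta_eq0_Mdyn s a s' : in_data D s -> beta s a = 0 -> Mdyn s a s' = 0.
Proof.
move=> /cnt_s_gt0 s_gt0 /eqP; rewrite mulf_eq0 invr_eq0 !pnatr_eq0.
by rewrite [cnt_s _ _ == _]eqn0Ngt s_gt0 orbF /Mdyn lt0n => ->.
Qed.

(* Off the data cnt_s = 0 and beta is the junk value 0, hence the fallback pi. *)
Definition beta_on_data (pi : S -> A -> R) s a : R :=
  if in_data D s then beta s a else pi s a.

Lemma beta_on_data_policy pi : is_policy pi -> is_policy (beta_on_data pi).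
Proof.
move=> pol s; rewrite /beta_on_data.
case: (boolP (in_data D s)) => [sD|_]; last exact: pol s.
by split=> [a|]; [exact: beta_ge0 | exact: sum_beta sD].
Qed.

Lemma Mpol_beta_on_data_gt0 pi t :
  t \in D -> 0 < Mpol (beta_on_data pi) t.1.1 t.2.
Proof.
move=> tD; rewrite /Mpol /beta_on_data.
have -> : in_data D t.1.1 by apply/hasP; exists t.
exact: Ndyn_gt0.
Qed.

Definition shift_mass (pi : S -> A -> R) s a a0 s1 b : R :=
  pi s1 b + (if s1 == s then ((b == a0)%:R - (b == a)%:R) * pi s a else 0).

Lemma shift_mass_policy pi s a a0 :
  is_policy pi -> a0 != a -> is_policy (shift_mass pi s a a0).
Proof.
move=> pol a0a s1; rewrite /shift_mass.
have [pi_ge0 sum_pi] := pol s1; have [->|_] := eqVneq s s1; last first.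
  by split=> [b|]; [rewrite addr0 | rewrite big_split /= big1_eq addr0].
split=> [b|].
  have [->|_] := eqVneq b a.
    by rewrite eq_sym (negbTE a0a) sub0r mulN1r subrr.
  by rewrite subr0 addr_ge0 ?mulr_ge0.
rewrite big_split /= sum_pi; under eq_bigr do rewrite mulrBl.
by rewrite sumrB !sum_indicatorM subrr addr0.
Qed.

Lemma Mpol_shift_mass pi s a a0 s1 s2 :
  (forall s', Mdyn s a s' = 0) ->
  Mpol (shift_mass pi s a a0) s1 s2 =
  Mpol pi s1 s2 + (if s1 == s then pi s a * Mdyn s1 a0 s2 else 0).
Proof.
move=> Ma0; rewrite /Mpol /shift_mass.
under eq_bigr do rewrite mulrDl.
rewrite big_split /=; congr (_ + _).
case: (eqVneq s1 s) => [->|_]; last by rewrite big1 // => b _; rewrite mul0r.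
under eq_bigr do rewrite mulrBl mulrBl -!mulrA.
by rewrite sumrB !sum_indicatorM Ma0 mulr0 subr0.
Qed.

End EmpiricalModel.

Section Maximizer.
Variables (R : realType) (S A : finType) (D : seq (trans S A)).
Variable w : S -> S -> R.
Hypothesis w_gt0 : forall t, t \in D -> 0 < w t.1.1 t.2.

Local Notation Mpol := (@Mpol R S A D).
Local Notation Mdyn := (@Mdyn R S A D).

Lemma avg_objE pi : (forall t, t \in D -> 0 < Mpol pi t.1.1 t.2) ->
  avg_obj D w pi =
  ((size D)%:R^-1 * \sum_(t <- D) w t.1.1 t.2 * ln (Mpol pi t.1.1 t.2))%:E.
Proof.
move=> Mpol_gt0; rewrite /avg_obj EFinM -sumEFin; congr (_ * _)%E.
by apply: eq_big_seq => t tD; rewrite /elog Mpol_gt0.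
Qed.

Lemma avg_obj_Ny pi t : t \in D -> ~~ (0 < Mpol pi t.1.1 t.2) ->
  avg_obj D w pi = -oo%E.
Proof.
move=> tD Mpol_le0; have size_gt0 := inv_size_gt0 R tD.
rewrite /avg_obj (perm_big _ (perm_to_rem tD)) big_cons /elog (negbTE Mpol_le0).
rewrite mulrNy gtr0_sg ?w_gt0 // mul1e [X in (_ * X)%E]addNye.
by rewrite mulrNy gtr0_sg // mul1e.
Qed.

Lemma avg_obj_lt pi pi' t0 : t0 \in D ->
  (forall t, t \in D -> 0 < Mpol pi t.1.1 t.2) ->
  (forall t, t \in D -> Mpol pi t.1.1 t.2 <= Mpol pi' t.1.1 t.2) ->
  Mpol pi t0.1.1 t0.2 < Mpol pi' t0.1.1 t0.2 ->
  (avg_obj D w pi < avg_obj D w pi')%E.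
Proof.
move=> t0D pi_gt0 le_pi' lt_pi'.
have pi'_gt0 t : t \in D -> 0 < Mpol pi' t.1.1 t.2.
  by move=> tD; apply: lt_le_trans (pi_gt0 t tD) (le_pi' t tD).
rewrite !avg_objE // lte_fin ltr_pM2l ?(inv_size_gt0 R t0D) //.
apply: (ltr_sum_mem t0D).
  move=> t tD; rewrite ler_pM2l ?w_gt0 //.
  by rewrite ler_ln ?posrE ?pi_gt0 ?pi'_gt0 ?le_pi'.
by rewrite ltr_pM2l ?w_gt0 // ltr_ln ?posrE ?pi_gt0 ?pi'_gt0.
Qed.

Lemma maximizer_Mpol_gt0 pi : is_maximizer (avg_obj D w) pi ->
  forall t, t \in D -> 0 < Mpol pi t.1.1 t.2.
Proof.
move=> [pol pi_max]; apply/allP; apply: contraT => /allPn[t tD Mpol_le0].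
have := pi_max _ (beta_on_data_policy D pol).
rewrite (avg_obj_Ny tD Mpol_le0) avg_objE //; exact: Mpol_beta_on_data_gt0.
Qed.

Lemma maximizer_supp_beta pi s : is_maximizer (avg_obj D w) pi -> in_data D s ->
  supp (pi s) `<=` supp (@beta R S A D s).
Proof.
move=> pi_max sD a /= pi_sa_neq0; apply: contraT => /negPn /eqP beta_sa.
have [t0 t0D /eqP t0s] := hasP sD.
have Ma0 s' : Mdyn s a s' = 0 by exact: beta_eq0_Mdyn.
have a0a : t0.1.2 != a.
  by apply: contraTneq (Mdyn_gt0 R t0D) => ->; rewrite t0s Ma0 ltxx.
have [pol _] := pi_max; have pi_sa_gt0 : 0 < pi s a.
  by rewrite lt_def pi_sa_neq0 (pol s).1.
have Mpol_shift s1 s2 := Mpol_shift_mass pi t0.1.2 s1 s2 Ma0.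
have shift_le := pi_max.2 _ (shift_mass_policy s pol a0a).
suff : (avg_obj D w pi < avg_obj D w (shift_mass pi s a t0.1.2))%E.
  by rewrite ltNge shift_le.
apply: (avg_obj_lt t0D (maximizer_Mpol_gt0 pi_max)) => [t tD|].
  rewrite Mpol_shift lerDl; case: ifP => // _.
  by rewrite mulr_ge0 ?Mdyn_ge0 ?ltW.
by rewrite Mpol_shift t0s eqxx ltrDl mulr_gt0 // -t0s Mdyn_gt0.
Qed.

End Maximizer.

Theorem proposition2 (R : realType) (S A : finType) (D : seq (trans S A))
    (V : S -> R) (alpha : R) (halpha : 0 <= alpha) :
  (forall pistar : S -> A -> R,
     is_maximizer (Rbar_obj D alpha V) pistar ->
     forall s : S, in_data D s -> supp (pistar s) `<=` supp (@beta R S A D s)) /\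
  (forall pi1star : S -> A -> R,
     is_maximizer (Rbar1_obj D alpha V) pi1star ->
     forall s : S, in_data D s -> supp (pi1star s) `<=` supp (@beta R S A D s)).
Proof.
split=> pi pi_max s sD; apply: (maximizer_supp_beta _ pi_max sD) => t tD.
  by rewrite divr_gt0 ?expR_gt0 ?Zpart_gt0.
by rewrite divr_gt0 ?expR_gt0.
Qed.
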